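(* Let $P$ be a finite poset and $Q$ a poset ideal of $P$. Then the natural inclusion $\Delta(P)\subseteq\Delta(P\uplus Q)$ makes the geometric realization of $\Delta(P)$ a deformation retract of that of $\Delta(P\uplus Q)$. In particular, for any field $k$ and every $i$, the induced maps $\tilde H^i(\Delta(P\uplus Q);k)\to\tilde H^i(\Delta(P);k)$ are isomorphisms.
   Context: $\Delta(\cdot)$ denotes the order complex (simplicial complex of chains). A poset ideal $Q$ of $P$ is a subset with $x\in Q$, $y<x$ implying $y\in Q$. The poset $P\uplus Q$ has underlying set $P\cup Q^\ast$, $Q^\ast=\{x^\ast:x\in Q\}$ a disjoint copy of $Q$, with $\alpha<\beta$ iff either $\alpha,\beta\in P$ and $\alpha<\beta$ in $P$; or $\alpha=x^\ast,\beta=y^\ast$ with $x<y$ in $P$; or $\alpha=x^\ast$ with $x\in Q$, $\beta\in P$ and $x\le\beta$ in $P$. *)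

From HB Require Import structures.
From mathcomp Require Import all_boot all_order all_algebra.
From mathcomp Require Import reals.
Set Implicit Arguments. Unset Strict Implicit. Unset Printing Implicit Defensive.
Import Order.TTheory GRing.Theory Num.Theory.
Local Open Scope ring_scope.

Definition poset_ideal (d : Order.disp_t) (T : finPOrderType d) (Q : {set T}) :=
  forall x y : T, x \in Q -> (y < x)%O -> y \in Q.

(* P ⊎ Q is modelled on the finite type T + T: inl x is x ∈ P, inr x is x^*.
   Its underlying set is {inl x | x ∈ P} ∪ {inr x | x ∈ Q}. *)
Definition uplus_ground (d : Order.disp_t) (T : finPOrderType d) (Q : {set T})
  : {set T + T} :=
  [set v | match v with inl _ => true | inr x => x \in Q end].

Definition uplus_lt (d : Order.disp_t) (T : finPOrderType d) (Q : {set T})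
  (a b : T + T) : bool :=
  match a, b with
  | inl x, inl y => (x < y)%O
  | inr x, inr y => [&& x \in Q, y \in Q & (x < y)%O]
  | inr x, inl y => (x \in Q) && (x <= y)%O
  | inl _, inr _ => false
  end.

(* Order complex of the strict order [lt] on the ground set [S]: all chains
   (including the empty chain, used for reduced cohomology). *)
Definition order_complex (V : finType) (lt : rel V) (S : {set V})
  : {set {set V}} :=
  [set s : {set V} | (s \subset S) &&
     [forall x in s, forall y in s, [|| x == y, lt x y | lt y x]]].

Definition Delta_P (d : Order.disp_t) (T : finPOrderType d) : {set {set T}} :=
  order_complex (fun x y : T => (x < y)%O) [set: T].

Definition Delta_PuQ (d : Order.disp_t) (T : finPOrderType d) (Q : {set T})
  : {set {set T + T}} :=
  order_complex (uplus_lt Q) (uplus_ground Q).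

(* |K| ⊆ R^V : barycentric-coordinate points whose support is a simplex of K. *)
Definition realization (R : realType) (V : finType) (K : {set {set V}})
  (x : V -> R) : Prop :=
  (forall v, 0 <= x v) /\ \sum_(v : V) x v = 1 /\ [set v | x v != 0] \in K.

Definition incl_real (R : realType) (T : finType) (x : T -> R) : T + T -> R :=
  fun v => match v with inl t => x t | inr _ => 0 end.

(* Continuity on a subset D of R × R^V (with the subspace topology of the
   usual topology of R × R^V), of a map into R^W, in epsilon-delta form. *)
Definition continuous_on (R : realType) (V W : finType)
  (D : R -> (V -> R) -> Prop) (H : R -> (V -> R) -> W -> R) : Prop :=
  forall t x, D t x -> forall e : R, 0 < e ->
    exists2 dl : R, 0 < dl &
      forall s y, D s y -> `|s - t| < dl -> (forall v, `|y v - x v| < dl) ->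
        forall w, `|H s y w - H t x w| < e.

(* Cochains are functions on vertex sets; an i-cochain only matters on the
   simplices with i+1 vertices (the empty simplex has degree -1, giving the
   reduced complex).  Simplices of an order complex are chains, oriented by
   the order [lt]. *)

Definition csign (k : fieldType) (V : finType) (lt : rel V) (s : {set V}) (v : V)
  : k := (-1) ^+ #|[set w in s | lt w v]|.

Definition coboundary_map (k : fieldType) (V : finType) (lt : rel V)
  (f : {set V} -> k) (s : {set V}) : k :=
  \sum_(v in s) csign k lt s v * f (s :\ v).

Definition is_cocycle (k : fieldType) (V : finType) (lt : rel V)
  (K : {set {set V}}) (i : int) (f : {set V} -> k) : Prop :=
  forall s, s \in K -> (#|s|%:Z = i + 2)%R -> coboundary_map lt f s = 0.

Definition is_coboundary (k : fieldType) (V : finType) (lt : rel V)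
  (K : {set {set V}}) (i : int) (f : {set V} -> k) : Prop :=
  exists g : {set V} -> k,
    forall s, s \in K -> (#|s|%:Z = i + 1)%R -> f s = coboundary_map lt g s.

Definition restr_cochain (k : fieldType) (T : finType) (f : {set T + T} -> k)
  : {set T} -> k := fun s => f (inl @: s).

Definition restr_iso_on_cohomology (k : fieldType) (T : finType)
  (ltP : rel T) (KP : {set {set T}}) (ltB : rel (T + T)) (KB : {set {set T + T}})
  (i : int) : Prop :=
  (forall f : {set T + T} -> k, is_cocycle ltB KB i f ->
     is_coboundary ltP KP i (restr_cochain f) -> is_coboundary ltB KB i f) /\
  (forall g : {set T} -> k, is_cocycle ltP KP i g ->
     exists2 f : {set T + T} -> k, is_cocycle ltB KB i f &
       is_coboundary ltP KP i (fun s => g s - restr_cochain f s)).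

From HB Require Import structures.
From mathcomp Require Import all_boot all_order all_algebra.
From mathcomp Require Import reals.
From mathcomp Require Import ring lra.
From Stdlib Require Import FunctionalExtensionality.
Set Implicit Arguments. Unset Strict Implicit. Unset Printing Implicit Defensive.
Import Order.TTheory GRing.Theory Num.Theory.
Local Open Scope ring_scope.

(* Write [x^*] for the copy in [Q^*] of [x \in Q].  In a chain of P ⊎ Q the
   starred vertices come first and form a chain of their own.  The homotopy
   slides the mass of each [x^*] onto [x], the starred chain being emptied from
   its top downwards at unit speed; a starred vertex still carrying mass then
   lies below every vertex that has received mass, so supports stay chains,
   and at time 1 all the mass sits on P.

   For cohomology, remove the starred copies of the elements of [Q] one at a
   time, from a maximal [x] downwards.  By maximality of [x], every chain
   through [x^*] stays a chain when [x] is added, i.e. [x^*] is dominated by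
   [x]; the cone with apex [x] gives an explicit cochain homotopy showing that
   deleting a dominated vertex does not change reduced cohomology. *)

Section Coboundary.
Variables (k : fieldType) (V : finType) (lt : rel V).
Implicit Types (f g : {set V} -> k) (s t : {set V}) (K L M : {set {set V}}).

Lemma coboundary_mapD f g s :
  coboundary_map lt (fun t => f t + g t) s =
  coboundary_map lt f s + coboundary_map lt g s.
Proof. by rewrite -big_split; apply: eq_bigr => v _; rewrite mulrDr. Qed.

Lemma coboundary_mapB f g s :
  coboundary_map lt (fun t => f t - g t) s =
  coboundary_map lt f s - coboundary_map lt g s.
Proof. by rewrite -sumrB; apply: eq_bigr => v _; rewrite mulrBr. Qed.

Lemma coboundary_map0 s : coboundary_map lt (fun _ => 0 : k) s = 0.
Proof. by rewrite /coboundary_map big1 // => v _; rewrite mulr0. Qed.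

Lemma csign_mulss s v : csign k lt s v * csign k lt s v = 1.
Proof. by rewrite -expr2 sqrr_sign. Qed.

Lemma csign_setU1 s x v : x \notin s ->
  csign k lt (x |: s) v = (-1) ^+ lt x v * csign k lt s v.
Proof.
move=> xNs; rewrite /csign.
have -> : [set w in x |: s | lt w v] =
    if lt x v then x |: [set w in s | lt w v] else [set w in s | lt w v].
  apply/setP => w; case ltxv: (lt x v); rewrite !inE;
    by case: (eqVneq w x) => [->|] /=; rewrite ?ltxv ?(negbTE xNs).
case: (lt x v); last by rewrite mul1r.
by rewrite cardsU1 inE (negbTE xNs) exprS.
Qed.

Lemma csign_setD1 s x v : x \in s ->
  csign k lt s v = (-1) ^+ lt x v * csign k lt (s :\ x) v.
Proof. by move=> xs; rewrite -{1}(setD1K xs) csign_setU1 // !inE eqxx. Qed.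

Definition restriction_iso (K L : {set {set V}}) := forall i : int,
  (forall f, is_cocycle lt K i f -> is_coboundary lt L i f ->
     is_coboundary lt K i f) /\
  (forall g, is_cocycle lt L i g ->
     exists2 f, is_cocycle lt K i f & is_coboundary lt L i (fun s => g s - f s)).

Lemma restriction_iso_refl K : restriction_iso K K.
Proof.
move=> i; split=> // g g_cocycle; exists g => //.
by exists (fun _ => 0) => s _ _; rewrite subrr coboundary_map0.
Qed.

Lemma restriction_iso_trans K L M : M \subset L -> L \subset K ->
  restriction_iso K L -> restriction_iso L M -> restriction_iso K M.
Proof.
move=> /subsetP sML /subsetP sLK isoKL isoLM i.
have [injKL surjKL] := isoKL i; have [injLM surjLM] := isoLM i.
split=> [f f_cocycle f_cob|g g_cocycle].
  apply: injKL => //; apply: injLM => // s sL; exact/f_cocycle/sLK.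
have [fL fL_cocycle [hM hME]] := surjLM g g_cocycle.
have [fK fK_cocycle [hL hLE]] := surjKL fL fL_cocycle.
exists fK => //; exists (fun s => hM s + hL s) => s sM s_size.
by rewrite coboundary_mapD -hME // -hLE ?sML // addrA subrK.
Qed.

Hypothesis lt_asym : forall a b, lt a b -> lt b a -> False.

Lemma lt_irr a : lt a a = false.
Proof. by apply/negP => ltaa; apply: (lt_asym ltaa ltaa). Qed.

Definition is_chain s := {in s &, forall a b, a != b -> lt a b || lt b a}.

Lemma sum_setD1_chain s v (F : V -> k) : is_chain s -> v \in s ->
  \sum_(w in s :\ v) F w =
  \sum_(w in s) (if lt v w then F w else 0) +
  \sum_(w in s) (if lt w v then F w else 0).
Proof.
move=> chs vs; rewrite -!big_mkcondr (bigID (lt v)) /=; congr (_ + _).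
  by apply: eq_bigl => w; rewrite !inE; case: eqVneq => [->|]; rewrite ?lt_irr ?andbF.
apply: eq_bigl => w; rewrite !inE; case: (eqVneq w v) => [->|wNv] /=.
  by rewrite lt_irr andbF.
case ws: (w \in s) => //=.
case ltvw: (lt v w); case ltwv: (lt w v) => //=; first by case: (lt_asym ltvw ltwv).
by move: (chs _ _ ws vs wNv); rewrite ltvw ltwv.
Qed.

(* The two summands indexed by (v, w) and (w, v) with [lt v w] cancel. *)
Lemma coboundary_map2_eq0 f s : is_chain s ->
  coboundary_map lt (coboundary_map lt f) s = 0.
Proof.
move=> chs; rewrite /coboundary_map.
set a := fun v w => csign k lt s v * (csign k lt (s :\ v) w * f (s :\ v :\ w)).
under eq_bigr => v vs do
  rewrite big_distrr /= (sum_setD1_chain (a v) chs vs).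
rewrite big_split /= [X in _ + X]exchange_big /= -big_split /=.
apply: big1 => v vs; rewrite -big_split /=; apply: big1 => w ws.
case: ifP => [ltvw|_]; last by rewrite addr0.
have ltwvF : lt w v = false by apply/negP => /(lt_asym ltvw).
rewrite /a (csign_setD1 w vs) (csign_setD1 v ws) ltvw ltwvF expr0 mul1r expr1.
have -> : s :\ w :\ v = s :\ v :\ w by rewrite setDDl setUC -setDDl.
ring.
Qed.

Lemma card_setU1Z s x : x \notin s -> #|x |: s|%:Z = #|s|%:Z + 1.
Proof. by move=> xNs; rewrite cardsU1 xNs add1n -addn1 PoszD. Qed.

Section DominatedVertex.
Variables (K : {set {set V}}) (p u : V).
Hypothesis K_down : forall s t, s \in K -> t \subset s -> t \in K.
Hypothesis K_chain : forall s, s \in K -> is_chain s.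
Hypothesis u_cone : forall s, s \in K -> p \in s -> u |: s \in K.
Hypothesis p_neq_u : p != u.

Definition vertex_deletion := [set s in K | p \notin s].

Definition cone_op f s : k :=
  if (p \in s) && (u \notin s) then csign k lt (u |: s) u * f (u |: s) else 0.

Lemma cone_op_out f s : p \notin s -> cone_op f s = 0.
Proof. by rewrite /cone_op => /negbTE ->. Qed.

Lemma coboundary_cone_op_out f s : p \notin s ->
  coboundary_map lt (cone_op f) s = 0.
Proof.
move=> pNs; rewrite /coboundary_map big1 // => w _.
by rewrite cone_op_out ?mulr0 // !inE negb_and pNs orbT.
Qed.

Lemma coboundary_cone_op_apex f s : p \in s -> u \in s ->
  coboundary_map lt (cone_op f) s = f s.
Proof.
move=> ps us; rewrite /coboundary_map (bigD1 u) //= big1 ?addr0.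
  by rewrite /cone_op !inE eqxx ps p_neq_u /= (setD1K us) mulrA csign_mulss mul1r.
move=> w /andP[_ wNu]; rewrite /cone_op !inE (eq_sym u w) wNu us /=.
by rewrite andbF mulr0.
Qed.

Lemma cone_op_homotopy f s : p \in s -> u \notin s -> is_chain (u |: s) ->
  coboundary_map lt (cone_op f) s + cone_op (coboundary_map lt f) s =
  f s + csign k lt (u |: s) u * csign k lt (u |: s) p * f ((u |: s) :\ p).
Proof.
move=> ps uNs chus.
rewrite {2}/cone_op ps uNs /= {2}/coboundary_map big_setU1 //= setU1K //.
rewrite mulrDr mulrA csign_mulss mul1r addrCA; congr (_ + _).
rewrite /coboundary_map (bigD1 p ps) [X in _ + _ * X](bigD1 p ps) /=.
rewrite cone_op_out ?mulr0 ?add0r ?setD11 // mulrDr mulrA addrC -addrA.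
rewrite -[RHS]addr0; congr (_ + _).
rewrite big_distrr -big_split /=; apply: big1 => w /andP[ws wNp].
have wNu : w != u by apply: contraNneq uNs => <-.
have uNsw : u \notin s :\ w by rewrite !inE negb_and uNs orbT.
rewrite /cone_op !inE eq_sym wNp ps eq_sym wNu (negbTE uNs) /=.
have -> : (u |: s) :\ w = u |: (s :\ w).
  apply/setP => z; rewrite !inE.
  by case: (eqVneq z u) => [->|] /=; rewrite ?(eq_sym u w) ?wNu.
rewrite (csign_setU1 u uNsw) (csign_setU1 u uNs) (csign_setU1 w uNs).
rewrite lt_irr (csign_setD1 u ws) expr0 !mul1r.
have : lt u w || lt w u by apply: chus; [exact: setU11 | exact: setU1r | rewrite eq_sym].
case ltuw: (lt u w); case ltwu: (lt w u) => //= _;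
  [by case: (lt_asym ltuw ltwu) | by rewrite expr1; ring | by rewrite expr1; ring].
Qed.

Lemma card_setU1D1 s : p \in s -> u \notin s -> #|(u |: s) :\ p| = #|s|.
Proof.
move=> ps uNs; apply/succn_inj; have := cardsD1 p (u |: s).
by rewrite cardsU1 uNs !inE ps orbT.
Qed.

Lemma coboundary_cone_op_cocycle i f : is_cocycle lt K i f ->
  (forall s, s \in vertex_deletion -> #|s|%:Z = i + 1 -> f s = 0) ->
  forall s, s \in K -> #|s|%:Z = i + 1 -> f s = coboundary_map lt (cone_op f) s.
Proof.
move=> f_cocycle f0 s sK s_size.
case ps: (p \in s); last first.
  by rewrite coboundary_cone_op_out ?ps // f0 // inE sK ps.
case us: (u \in s); first by rewrite coboundary_cone_op_apex.
have usK := u_cone sK ps.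
move: (cone_op_homotopy f ps (negbT us) (K_chain usK)).
have -> : cone_op (coboundary_map lt f) s = 0.
  rewrite /cone_op ps us f_cocycle ?mulr0 //.
  by rewrite card_setU1Z ?us // s_size -addrA.
have -> : f ((u |: s) :\ p) = 0.
  apply: f0; last by rewrite card_setU1D1 ?us.
  by rewrite inE (K_down usK (subD1set _ _)) !inE eqxx.
by rewrite addr0 mulr0 addr0 => ->.
Qed.

Lemma deletion_cohomology_inj i f :
  is_cocycle lt K i f -> is_coboundary lt vertex_deletion i f ->
  is_coboundary lt K i f.
Proof.
move=> f_cocycle [h fE].
set f' := fun s => f s - coboundary_map lt h s.
have f'_cocycle : is_cocycle lt K i f'.
  move=> s sK s_size; rewrite coboundary_mapB coboundary_map2_eq0 ?subr0.
    exact: f_cocycle.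
  exact: K_chain.
have f'_deletion0 s : s \in vertex_deletion -> #|s|%:Z = i + 1 -> f' s = 0.
  by move=> sD s_size; rewrite /f' fE ?subrr.
exists (fun s => h s + cone_op f' s) => s sK s_size.
rewrite coboundary_mapD -(coboundary_cone_op_cocycle f'_cocycle f'_deletion0) //.
by rewrite /f' addrC subrK.
Qed.

Lemma deletion_cohomology_surj i g : is_cocycle lt vertex_deletion i g ->
  exists2 f, is_cocycle lt K i f &
    is_coboundary lt vertex_deletion i (fun s => g s - f s).
Proof.
move=> g_cocycle.
exists (fun s => g s - coboundary_map lt (cone_op g) s -
                 cone_op (coboundary_map lt g) s).
  move=> s sK s_size.
  rewrite !coboundary_mapB coboundary_map2_eq0 ?subr0; last exact: K_chain.
  have dg_cocycle : is_cocycle lt K (i + 1) (coboundary_map lt g).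
    by move=> t tK _; rewrite coboundary_map2_eq0 //; exact: K_chain.
  rewrite -(coboundary_cone_op_cocycle dg_cocycle) ?subrr // => [t tD t_size|].
    by apply: g_cocycle; rewrite // t_size -addrA.
  by rewrite s_size -addrA.
exists (fun s => cone_op g s) => s sD s_size.
have pNs : p \notin s by move: sD; rewrite inE => /andP[].
by rewrite cone_op_out // subr0 opprB addrC subrK.
Qed.

Lemma deletion_restriction_iso : restriction_iso K vertex_deletion.
Proof.
by move=> i; split; [exact: deletion_cohomology_inj | exact: deletion_cohomology_surj].
Qed.

End DominatedVertex.
End Coboundary.

Section OrderComplex.
Variables (V : finType) (lt : rel V) (S : {set V}).
Implicit Types s t : {set V}.

Lemma order_complexP s : reflect
  (s \subset S /\ {in s &, forall a b, [|| a == b, lt a b | lt b a]})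
  (s \in order_complex lt S).
Proof.
rewrite inE; apply: (iffP andP) => [[sS /forallP chs]|[sS chs]]; split=> //.
  by move=> a b sa sb; move: (chs a); rewrite sa => /forallP /(_ b); rewrite sb.
by apply/forall_inP => a sa; apply/forall_inP => b sb; apply: chs.
Qed.

Lemma order_complex_down s t :
  s \in order_complex lt S -> t \subset s -> t \in order_complex lt S.
Proof.
move=> /order_complexP[sS chs] ts; apply/order_complexP; split.
  exact: subset_trans ts sS.
by move=> a b /(subsetP ts) sa /(subsetP ts) sb; apply: chs.
Qed.

Lemma order_complex_chain s : s \in order_complex lt S -> is_chain lt s.
Proof.
move=> /order_complexP[_ chs] a b sa sb aNb.
by move: (chs a b sa sb); rewrite (negbTE aNb).
Qed.

End OrderComplex.

Lemma order_complex_eq (V : finType) (lt lt' : rel V) (S : {set V}) :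
  {in S &, lt =2 lt'} -> order_complex lt S = order_complex lt' S.
Proof.
move=> ltE; apply/setP => s; apply/order_complexP/order_complexP => -[sS chs];
  split=> // a b sa sb; have [aS bS] := (subsetP sS a sa, subsetP sS b sb).
  by rewrite -!ltE //; apply: chs.
by rewrite !ltE //; apply: chs.
Qed.

Lemma coboundary_map_eq (k : fieldType) (V : finType) (lt lt' : rel V)
  (f : {set V} -> k) (s : {set V}) :
  {in s &, lt =2 lt'} -> coboundary_map lt f s = coboundary_map lt' f s.
Proof.
move=> ltE; apply: eq_bigr => v vs; congr (_ ^+ _ * _); apply: eq_card => w.
by rewrite !inE; case ws: (w \in s); rewrite //= ltE.
Qed.

Section UplusComplex.
Variables (d : Order.disp_t) (T : finPOrderType d).
Implicit Types (Q : {set T}) (s : {set T + T}).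

(* [uplus_lt Q] agrees with [uplus_lt [set: T]] on the ground set of
   P ⊎ Q, so all the complexes [uplus_complex Q] can share the latter
   orientation. *)
Definition uplus_ltT : rel (T + T) := uplus_lt [set: T].

Definition uplus_complex Q := order_complex uplus_ltT (uplus_ground Q).

Lemma uplus_ltT_asym a b : uplus_ltT a b -> uplus_ltT b a -> False.
Proof.
by case: a b => [x|x] [y|y] //=; rewrite ?inE /= => ltxy /(lt_trans ltxy); rewrite ltxx.
Qed.

Lemma uplus_lt_ground Q : {in uplus_ground Q &, uplus_lt Q =2 uplus_ltT}.
Proof.
by move=> [x|x] [y|y]; rewrite !inE //= => hx hy; rewrite ?inE ?hx ?hy.
Qed.

Lemma Delta_PuQE Q : Delta_PuQ Q = uplus_complex Q.
Proof. exact/order_complex_eq/uplus_lt_ground. Qed.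

Lemma uplus_complexS Q1 Q2 :
  Q2 \subset Q1 -> uplus_complex Q2 \subset uplus_complex Q1.
Proof.
move=> /subsetP sQ; apply/subsetP => s /order_complexP[sS chs].
apply/order_complexP; split=> //.
by apply/subsetP => -[x|x] /(subsetP sS); rewrite !inE //; exact: sQ.
Qed.

Lemma uplus_complex_setD1 Q x :
  uplus_complex (Q :\ x) = vertex_deletion (uplus_complex Q) (inr x).
Proof.
apply/setP => s; apply/idP/idP => [sK|].
  rewrite inE (subsetP (uplus_complexS (subD1set Q x)) _ sK) /=.
  move: sK => /order_complexP[sS _].
  by apply/negP => /(subsetP sS); rewrite !inE eqxx.
rewrite inE => /andP[/order_complexP[sS chs] xNs].
apply/order_complexP; split=> //; apply/subsetP => -[y|y] ys; rewrite !inE //.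
move: (subsetP sS _ ys); rewrite inE => ->; rewrite andbT.
by apply: contraNneq xNs => <-.
Qed.

Lemma exists_maximal Q : Q != set0 ->
  exists2 x, x \in Q & {in Q, forall y, ~~ (x < y)%O}.
Proof.
case/set0Pn => x0 x0Q.
have [x xQ xmax] := arg_maxnP (fun y => #|[set z | (z <= y)%O]|) x0Q.
exists x => // y yQ; apply/negP => ltxy; have := xmax y yQ; apply/negP.
rewrite -ltnNge; apply: proper_card; rewrite properE; apply/andP; split.
  by apply/subsetP => z; rewrite !inE => /le_trans; apply; exact: ltW.
by apply/subsetP => /(_ y); rewrite !inE lexx (lt_geF ltxy) => /(_ isT).
Qed.

Lemma uplus_complex_cone Q x s : {in Q, forall y, ~~ (x < y)%O} ->
  s \in uplus_complex Q -> inr x \in s -> inl x |: s \in uplus_complex Q.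
Proof.
move=> xmax /order_complexP[sS chs] xs.
have cmp c : c \in s -> [|| c == inl x, uplus_ltT c (inl x) | uplus_ltT (inl x) c].
  case: c => [y|y] cs; have := chs _ _ cs xs; rewrite /= !inE /=.
    case: (eqVneq y x) => [->|yNx] lexy; first by rewrite eqxx.
    by rewrite [(x < y)%O]lt_def yNx lexy !orbT.
  have yQ : y \in Q by move: (subsetP sS _ cs); rewrite inE.
  by case/or3P=> [/eqP[->]|/ltW ->|/(negP (xmax y yQ))]; rewrite ?lexx ?orbT.
apply/order_complexP; split.
  by rewrite subUset sub1set inE sS.
move=> a b; rewrite !inE => /predU1P[->|sa] /predU1P[->|sb]; rewrite ?eqxx //.
- by rewrite eq_sym; case/or3P: (cmp b sb) => ->; rewrite ?orbT.
- exact: cmp.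
- exact: chs.
Qed.

Lemma uplus_complex_restriction_iso (k : fieldType) Q :
  restriction_iso k uplus_ltT (uplus_complex Q) (uplus_complex set0).
Proof.
elim: {Q}#|Q| {-2}Q (erefl #|Q|) => [|n IHn] Q Q_card.
  by rewrite (cards0_eq Q_card); exact: restriction_iso_refl.
have [|x xQ xmax] := exists_maximal (Q := Q); first by rewrite -card_gt0 Q_card.
apply: (restriction_iso_trans (L := uplus_complex (Q :\ x))).
- exact/uplus_complexS/sub0set.
- exact/uplus_complexS/subD1set.
- rewrite uplus_complex_setD1.
  apply: (@deletion_restriction_iso k _ _ uplus_ltT_asym _ _ (inl x)).
  + exact: order_complex_down.
  + exact: order_complex_chain.
  + by move=> s; apply: uplus_complex_cone.
  + by [].
- by apply: IHn; move: Q_card; rewrite (cardsD1 x) xQ => -[].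
Qed.

Lemma uplus_coboundary_mapE (k : fieldType) Q (f : {set T + T} -> k) s :
  s \in uplus_complex Q ->
  coboundary_map (uplus_lt Q) f s = coboundary_map uplus_ltT f s.
Proof.
move=> /order_complexP[sS _]; apply: coboundary_map_eq => a b sa sb.
by apply: uplus_lt_ground; apply: (subsetP sS).
Qed.

Lemma uplus_cocycleE (k : fieldType) Q i (f : {set T + T} -> k) :
  is_cocycle (uplus_lt Q) (Delta_PuQ Q) i f <->
  is_cocycle uplus_ltT (uplus_complex Q) i f.
Proof.
rewrite Delta_PuQE; split=> f_cocycle s sK s_size.
  by rewrite -(uplus_coboundary_mapE _ sK) f_cocycle.
by rewrite uplus_coboundary_mapE // f_cocycle.
Qed.

Lemma uplus_coboundaryE (k : fieldType) Q i (f : {set T + T} -> k) :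
  is_coboundary (uplus_lt Q) (Delta_PuQ Q) i f <->
  is_coboundary uplus_ltT (uplus_complex Q) i f.
Proof.
rewrite Delta_PuQE; split=> -[g fE]; exists g => s sK s_size;
  by rewrite fE // uplus_coboundary_mapE.
Qed.

Lemma inl_in_imset_inl (A : {set T}) y : (inl y \in @inl T T @: A) = (y \in A).
Proof. by rewrite mem_imset //; exact: inl_inj. Qed.

Lemma inr_in_imset_inl (A : {set T}) y : (inr y \in @inl T T @: A) = false.
Proof. by apply/imsetP => -[]. Qed.

Lemma card_imset_inl (A : {set T}) : #|@inl T T @: A| = #|A|.
Proof. by rewrite card_imset //; exact: inl_inj. Qed.

Lemma preimset_imset_inl (A : {set T}) : inl @^-1: (@inl T T @: A) = A.
Proof. by apply/setP => x; rewrite inE inl_in_imset_inl. Qed.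

Lemma uplus_complex0E :
  uplus_complex set0 = (fun A : {set T} => inl @: A) @: Delta_P T.
Proof.
apply/setP => s; apply/idP/imsetP.
  move=> /order_complexP[sS chs]; exists (inl @^-1: s).
    apply/order_complexP; split=> [|x y]; first exact: subsetT.
    by rewrite !inE => xs ys; move: (chs _ _ xs ys); rewrite (inj_eq inl_inj).
  apply/setP => -[x|x]; first by rewrite inl_in_imset_inl inE.
  by rewrite inr_in_imset_inl; apply/negP => /(subsetP sS); rewrite !inE.
move=> [A /order_complexP[_ chA] ->]; apply/order_complexP; split.
  by apply/subsetP => _ /imsetP[x _ ->]; rewrite inE.
by move=> _ _ /imsetP[x xA ->] /imsetP[y yA ->]; rewrite (inj_eq inl_inj); apply: chA.
Qed.

Lemma coboundary_map_imset_inl (k : fieldType) (f : {set T + T} -> k) (A : {set T}) :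
  coboundary_map uplus_ltT f (inl @: A) =
  coboundary_map (fun x y : T => (x < y)%O) (restr_cochain f) A.
Proof.
rewrite /coboundary_map big_imset /=; last by move=> x y _ _ [].
apply: eq_bigr => x xA; congr (_ ^+ _ * f _).
  rewrite -(card_imset_inl [set w in A | (w < x)%O]).
  by apply: eq_card => -[y|y]; rewrite !inE ?inl_in_imset_inl ?inr_in_imset_inl ?inE.
apply/setP => -[y|y]; rewrite !inE ?inl_in_imset_inl ?inr_in_imset_inl ?andbF //.
by rewrite (inj_eq inl_inj) in_setD1.
Qed.

Lemma uplus_cocycle0E (k : fieldType) i (f : {set T + T} -> k) :
  is_cocycle uplus_ltT (uplus_complex set0) i f <->
  is_cocycle (fun x y : T => (x < y)%O) (Delta_P T) i (restr_cochain f).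
Proof.
rewrite uplus_complex0E; split=> f_cocycle.
  move=> A AP A_size.
  by rewrite -coboundary_map_imset_inl f_cocycle ?imset_f ?card_imset_inl.
move=> _ /imsetP[A AP ->]; rewrite card_imset_inl => A_size.
by rewrite coboundary_map_imset_inl f_cocycle.
Qed.

Lemma uplus_coboundary0E (k : fieldType) i (f : {set T + T} -> k) :
  is_coboundary uplus_ltT (uplus_complex set0) i f <->
  is_coboundary (fun x y : T => (x < y)%O) (Delta_P T) i (restr_cochain f).
Proof.
rewrite uplus_complex0E; split=> -[g fE].
  exists (restr_cochain g) => A AP A_size.
  by rewrite -coboundary_map_imset_inl /restr_cochain fE ?imset_f ?card_imset_inl.
exists (fun s => g (inl @^-1: s)) => _ /imsetP[A AP ->].
rewrite card_imset_inl => A_size.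
rewrite coboundary_map_imset_inl -[f _]/(restr_cochain f A) fE //.
congr coboundary_map; apply: functional_extensionality => B.
by rewrite /restr_cochain preimset_imset_inl.
Qed.

Lemma uplus_restr_iso_on_cohomology (k : fieldType) Q i :
  restr_iso_on_cohomology k (fun x y : T => (x < y)%O) (Delta_P T)
    (uplus_lt Q) (Delta_PuQ Q) i.
Proof.
have [iso_inj iso_surj] := uplus_complex_restriction_iso k Q i.
split=> [f /uplus_cocycleE f_cocycle /uplus_coboundary0E f_cob|g g_cocycle].
  exact/uplus_coboundaryE/iso_inj.
pose g' s := g (inl @^-1: s).
have gE : g = restr_cochain g'.
  by apply: functional_extensionality => A; rewrite /restr_cochain /g' preimset_imset_inl.
rewrite gE in g_cocycle *.
move/uplus_cocycle0E: g_cocycle => /iso_surj[f f_cocycle /uplus_coboundary0E g'f_cob].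
by exists f => //; apply/uplus_cocycleE.
Qed.

End UplusComplex.

Section Lipschitz.
Variable R : realFieldType.

Lemma dist_min (a b c e : R) :
  `|Num.min a c - Num.min b e| <= `|a - b| + `|c - e|.
Proof.
have := ler_norm (a - b); have := ler_norm (b - a); rewrite distrC.
have := ler_norm (c - e); have := ler_norm (e - c); rewrite [`|e - c|]distrC.
by case: (leP a c); case: (leP b e) => *; rewrite ler_norml; apply/andP; split; lra.
Qed.

Lemma dist_max0 (a b : R) : `|Num.max a 0 - Num.max b 0| <= `|a - b|.
Proof.
have := ler_norm (a - b); have := ler_norm (b - a); rewrite distrC.
by case: (leP a 0); case: (leP b 0) => *; rewrite ler_norml; apply/andP; split; lra.
Qed.

End Lipschitz.

Section Homotopy.
Variables (d : Order.disp_t) (T : finPOrderType d) (Q : {set T}) (R : realType).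
Implicit Types (t : R) (X : T + T -> R).

Definition mass_above X x : R :=
  \sum_(w : T) (if (x < w)%O then X (inr w) else 0).

(* The mass moved from [x^*] to [x] by time [t]: the part of the mass of
   [x^*] that lies within distance [t] of the top of the chain of starred
   vertices. *)
Definition moved_mass t X x : R :=
  Num.min (Num.max (t - mass_above X x) 0) (X (inr x)).

Definition uplus_homotopy t X (v : T + T) : R :=
  match v with
  | inl y => X (inl y) + moved_mass t X y
  | inr x => X (inr x) - moved_mass t X x
  end.

Lemma mass_above_ge0 X x : (forall v, 0 <= X v) -> 0 <= mass_above X x.
Proof. by move=> X_ge0; apply: sumr_ge0 => w _; case: ifP. Qed.

Lemma moved_mass_ge0 t X x : (forall v, 0 <= X v) -> 0 <= moved_mass t X x.
Proof. by move=> X_ge0; rewrite /moved_mass le_min le_max lexx orbT X_ge0. Qed.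

Lemma moved_mass_le t X x : moved_mass t X x <= X (inr x).
Proof. by rewrite /moved_mass ge_min lexx orbT. Qed.

Lemma moved_mass_eq0 t X x : X (inr x) = 0 -> moved_mass t X x = 0.
Proof. by move=> Xx0; rewrite /moved_mass Xx0 min_r // le_max lexx orbT. Qed.

Lemma moved_mass_full t X x : mass_above X x + X (inr x) <= t ->
  moved_mass t X x = X (inr x).
Proof. by move=> le_t; rewrite /moved_mass min_r // le_max; apply/orP; left; lra. Qed.

Lemma sum_inr_pred1 X x : X (inr x) = \sum_(w : T) (if w == x then X (inr w) else 0).
Proof. by rewrite -big_mkcond big_pred1_eq. Qed.

Lemma mass_above_lt X a b : (forall v, 0 <= X v) -> (b < a)%O ->
  mass_above X a + X (inr a) <= mass_above X b.
Proof.
move=> X_ge0 ltba; rewrite sum_inr_pred1 /mass_above -big_split; apply: ler_sum => w _ /=.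
case: (eqVneq w a) => [->|wNa]; first by rewrite ltxx ltba add0r.
rewrite addr0; case: ifP => [/(lt_trans ltba) -> //|_].
by case: ifP.
Qed.

Lemma mass_above_le1 X x : (forall v, 0 <= X v) -> \sum_v X v = 1 ->
  mass_above X x + X (inr x) <= 1.
Proof.
move=> X_ge0 X_sum1; rewrite sum_inr_pred1 /mass_above -big_split /=.
rewrite -X_sum1 big_sumType /= -[X in X <= _]add0r lerD ?sumr_ge0 //.
apply: ler_sum => w _; case: (eqVneq w x) => [->|_]; first by rewrite ltxx add0r.
by rewrite addr0; case: ifP.
Qed.

Lemma sum_uplus_homotopy t X : \sum_v uplus_homotopy t X v = \sum_v X v.
Proof.
rewrite !big_sumType /= big_split sumrB /=.
by rewrite addrACA subrr addr0.
Qed.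

Section Support.
Variable X : T + T -> R.
Hypothesis X_real : realization (Delta_PuQ Q) X.

Let X_ge0 : forall v, 0 <= X v. Proof. by case: X_real. Qed.

Lemma realization_chain a b : X a != 0 -> X b != 0 ->
  [|| a == b, uplus_lt Q a b | uplus_lt Q b a].
Proof.
by case: X_real => _ [_ /order_complexP[_ chX]] Xa Xb; apply: chX; rewrite inE.
Qed.

Lemma realization_ground v : X v != 0 -> v \in uplus_ground Q.
Proof.
by case: X_real => _ [_ /order_complexP[sX _]] Xv; apply: (subsetP sX); rewrite inE.
Qed.

Lemma realization_comparable y1 y2 : y1 != y2 ->
  (X (inl y1) != 0) || (X (inr y1) != 0) -> (X (inl y2) != 0) || (X (inr y2) != 0) ->
  (y1 < y2)%O || (y2 < y1)%O.
Proof.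
pose base (v : T + T) := match v with inl y => y | inr y => y end.
have base_le a b : uplus_lt Q a b -> (base a <= base b)%O.
  by case: a b => x [y|y] //= => [/ltW|/andP[]|/and3P[_ _ /ltW]].
have lift y : (X (inl y) != 0) || (X (inr y) != 0) -> exists2 a, X a != 0 & base a = y.
  by case/orP; [exists (inl y) | exists (inr y)].
move=> y1Ny2 /lift[a1 Xa1 def_y1] /lift[a2 Xa2 def_y2].
rewrite -def_y1 -def_y2 in y1Ny2 *.
case/or3P: (realization_chain Xa1 Xa2) => [/eqP a12|/base_le|/base_le].
- by rewrite a12 eqxx in y1Ny2.
- by rewrite lt_neqAle y1Ny2 => ->.
- by rewrite [(base a2 < _)%O]lt_neqAle eq_sym y1Ny2 => ->; rewrite orbT.
Qed.

Variable t : R.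

Lemma homotopy_inr_neq0 x : uplus_homotopy t X (inr x) != 0 ->
  X (inr x) != 0 /\ moved_mass t X x < X (inr x).
Proof.
move=> Hx; have Xx : X (inr x) != 0.
  by apply: contra Hx => /eqP Xx0; rewrite /= moved_mass_eq0 // Xx0 subrr.
split=> //; rewrite lt_neqAle moved_mass_le andbT.
by apply: contra Hx => /eqP /= ->; rewrite subrr.
Qed.

Lemma homotopy_inl_neq0 y : uplus_homotopy t X (inl y) != 0 ->
  (X (inl y) != 0) || (X (inr y) != 0).
Proof.
move=> Hy; apply/norP => -[/negPn/eqP Xy0 /negPn/eqP Xy'0]; move: Hy.
by rewrite /= Xy0 moved_mass_eq0 // addr0 eqxx.
Qed.

(* Mass left on [a^*] means that [t] has not yet passed [a^*]; a starred
   [b^*] below [a^*] starts giving mass to [b] only once [a^*] is empty, so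
   every [b] carrying mass lies above [a]. *)
Lemma homotopy_inr_inl a b :
  uplus_homotopy t X (inr a) != 0 -> uplus_homotopy t X (inl b) != 0 ->
  uplus_lt Q (inr a) (inl b).
Proof.
move=> /homotopy_inr_neq0[Xa lt_moved] Hb.
have aQ : a \in Q by move: (realization_ground Xa); rewrite inE.
rewrite /= aQ /=; have [Xb|/negPn/eqP Xb0] := boolP (X (inl b) != 0).
  by case/or3P: (realization_chain Xa Xb) => //=; rewrite aQ.
have moved_b : moved_mass t X b != 0 by move: Hb; rewrite /= Xb0 add0r.
have Xb' : X (inr b) != 0 by apply: contra moved_b => /eqP /moved_mass_eq0 ->.
case: (eqVneq a b) => [-> //|aNb].
case/or3P: (realization_chain Xa Xb') => /=.
- by rewrite (inj_eq inr_inj) (negbTE aNb).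
- by case/and3P => _ _ /ltW.
case/and3P => _ _ /(mass_above_lt X_ge0) mass_ab.
have : 0 < moved_mass t X b by rewrite lt_def moved_b moved_mass_ge0.
rewrite /moved_mass lt_min lt_max ltxx orbF => /andP[lt_mass _].
suff /moved_mass_full moved_a : mass_above X a + X (inr a) <= t.
  by rewrite moved_a ltxx in lt_moved.
lra.
Qed.

Lemma uplus_homotopy_realization : realization (Delta_PuQ Q) (uplus_homotopy t X).
Proof.
split.
  by case=> [y|x] /=; [rewrite addr_ge0 ?moved_mass_ge0 | rewrite subr_ge0 moved_mass_le].
split; first by rewrite sum_uplus_homotopy; case: X_real => _ [].
apply/order_complexP; split.
  apply/subsetP => -[y|x]; rewrite !inE //= => Hx.
  by have [/realization_ground] := homotopy_inr_neq0 Hx; rewrite inE.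
move=> [y1|x1] [y2|x2]; rewrite !inE => H1 H2.
- have [->|y1Ny2] := eqVneq y1 y2; first by rewrite eqxx.
  by rewrite /= realization_comparable ?homotopy_inl_neq0 ?orbT.
- by rewrite homotopy_inr_inl ?orbT.
- by rewrite homotopy_inr_inl ?orbT.
- have [Xx1 _] := homotopy_inr_neq0 H1; have [Xx2 _] := homotopy_inr_neq0 H2.
  exact: realization_chain.
Qed.

End Support.

Lemma uplus_homotopy0 X : (forall v, 0 <= X v) -> uplus_homotopy 0 X = X.
Proof.
move=> X_ge0; have moved0 x : moved_mass 0 X x = 0.
  by rewrite /moved_mass max_r ?min_l // sub0r oppr_le0 mass_above_ge0.
by apply: functional_extensionality => -[y|x] /=; rewrite moved0 ?addr0 ?subr0.
Qed.

Lemma uplus_homotopy1 X : realization (Delta_PuQ Q) X ->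
  exists2 y, realization (Delta_P T) y & uplus_homotopy 1 X = incl_real y.
Proof.
move=> X_real; have [X_ge0 [X_sum1 _]] := X_real.
have moved1 x : moved_mass 1 X x = X (inr x) by apply/moved_mass_full/mass_above_le1.
exists (fun y => X (inl y) + X (inr y)); last first.
  by apply: functional_extensionality => -[y|x] /=; rewrite moved1 ?subrr.
split; first by move=> y; rewrite addr_ge0.
split; first by rewrite big_split /= -X_sum1 big_sumType.
apply/order_complexP; split=> [|y1 y2]; first exact: subsetT.
rewrite !inE => H1 H2; have [//|y1Ny2 /=] := eqVneq y1 y2.
have supp y : X (inl y) + X (inr y) != 0 -> (X (inl y) != 0) || (X (inr y) != 0).
  by apply: contraR; rewrite negb_or => /andP[/negPn/eqP -> /negPn/eqP ->]; rewrite addr0.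
exact: realization_comparable (supp _ H1) (supp _ H2).
Qed.

Lemma uplus_homotopy_incl t (y : T -> R) :
  uplus_homotopy t (incl_real y) = incl_real y.
Proof.
by apply: functional_extensionality => -[z|z] /=; rewrite moved_mass_eq0 ?addr0 ?subr0.
Qed.

Lemma incl_real_realization (y : T -> R) : realization (Delta_P T) y ->
  realization (Delta_PuQ Q) (incl_real y).
Proof.
move=> [y_ge0 [y_sum1 /order_complexP[_ chy]]]; split; first by case.
split; first by rewrite big_sumType /= big1_eq addr0.
apply/order_complexP; split; first by apply/subsetP => -[z|z]; rewrite !inE //= eqxx.
move=> [a|a] [b|b]; rewrite !inE ?eqxx //= (inj_eq inl_inj) => ya yb.
by apply: chy; rewrite inE.
Qed.


Lemma mass_above_dist X Y x (dl : R) : (forall v, `|Y v - X v| < dl) ->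
  `|mass_above Y x - mass_above X x| <= #|T|%:R * dl.
Proof.
move=> YX_dl; rewrite -sumrB; apply: le_trans (ler_norm_sum _ _ _) _.
rewrite -sum1_card natr_sum mulr_suml; apply: ler_sum => w _; rewrite mul1r.
case: ifP => _; first exact/ltW.
by rewrite subrr normr0; exact: le_trans (ltW (YX_dl (inl w))).
Qed.

Lemma moved_mass_dist s t X Y x :
  `|moved_mass s Y x - moved_mass t X x| <=
  `|s - t| + `|mass_above Y x - mass_above X x| + `|Y (inr x) - X (inr x)|.
Proof.
apply: le_trans (dist_min _ _ _ _) _; rewrite lerD2r.
apply: le_trans (dist_max0 _ _) _.
have -> : s - mass_above Y x - (t - mass_above X x) =
          (s - t) - (mass_above Y x - mass_above X x) by ring.
exact: ler_normB.
Qed.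

Lemma uplus_homotopy_continuous (D : R -> (T + T -> R) -> Prop) :
  continuous_on D uplus_homotopy.
Proof.
move=> t X _ e e_gt0; pose n : R := #|T|%:R.
have n_ge0 : 0 <= n by rewrite ler0n.
pose dl := e / (n + 3).
have dl_gt0 : 0 < dl by rewrite divr_gt0 //; lra.
have e_dl : e = n * dl + 3 * dl by rewrite -mulrDl mulrC divfK //; lra.
exists dl => // s Y _ st_dl YX_dl.
have moved_dl x : `|moved_mass s Y x - moved_mass t X x| <= dl + n * dl + dl.
  apply: le_trans (moved_mass_dist _ _ _ _ _) _.
  by rewrite !lerD ?mass_above_dist // ltW.
move: e_dl moved_dl; set m := n * dl => e_dl moved_dl.
case=> [y|x] /=.
  have -> : Y (inl y) + moved_mass s Y y - (X (inl y) + moved_mass t X y) =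
            (Y (inl y) - X (inl y)) + (moved_mass s Y y - moved_mass t X y) by ring.
  apply: le_lt_trans (ler_normD _ _) _.
  by have := YX_dl (inl y); have := moved_dl y; lra.
have -> : Y (inr x) - moved_mass s Y x - (X (inr x) - moved_mass t X x) =
          (Y (inr x) - X (inr x)) - (moved_mass s Y x - moved_mass t X x) by ring.
apply: le_lt_trans (ler_normB _ _) _.
by have := YX_dl (inr x); have := moved_dl x; lra.
Qed.

End Homotopy.

Theorem lemma6p5 (d : Order.disp_t) (T : finPOrderType d) (Q : {set T})
  (hQ : poset_ideal Q) :
  (forall R : realType,
     (forall y : T -> R, realization (Delta_P T) y ->
        realization (Delta_PuQ Q) (incl_real y)) /\
     exists H : R -> (T + T -> R) -> (T + T -> R),
       [/\ continuous_on
             (fun t x => 0 <= t <= 1 /\ realization (Delta_PuQ Q) x) H,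
           forall t x, 0 <= t <= 1 -> realization (Delta_PuQ Q) x ->
             realization (Delta_PuQ Q) (H t x),
           forall x, realization (Delta_PuQ Q) x -> H 0 x = x,
           forall x, realization (Delta_PuQ Q) x ->
             exists2 y, realization (Delta_P T) y & H 1 x = incl_real y
         & forall t y, 0 <= t <= 1 -> realization (Delta_P T) y ->
             H t (incl_real y) = incl_real y]) /\
  (forall (k : fieldType) (i : int),
     restr_iso_on_cohomology k (fun x y : T => (x < y)%O) (Delta_P T)
       (uplus_lt Q) (Delta_PuQ Q) i).
Proof.
split=> [R|k i]; last exact: uplus_restr_iso_on_cohomology.
split=> [y|]; first exact: incl_real_realization.
exists (@uplus_homotopy d T R); split.
- exact: uplus_homotopy_continuous.
- by move=> t X _ X_real; exact: uplus_homotopy_realization.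
- by move=> X [X_ge0 _]; exact: uplus_homotopy0.
- exact: uplus_homotopy1.
- by move=> t y _ _; exact: uplus_homotopy_incl.
Qed.
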